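(* The $(1,2)$ Las Vegas elitist black-box complexity of $\textsc{OneMax}$ is at most $2n+1$, and the corresponding algorithm needs at most $n+1$ generations. For every $\lambda\ge 2$ there are $(1,\lambda)$ Las Vegas and Monte Carlo elitist black-box algorithms that need at most $\lceil n/\lfloor\log_2\lambda\rfloor\rceil$ generations on $\textsc{OneMax}$.
   Context: For $z\in\{0,1\}^n$, $\textsc{Om}_z(x)=n-\sum_{i=1}^n (x_i\oplus z_i)$; $\textsc{OneMax}=\{\textsc{Om}_z : z\in\{0,1\}^n\}$. A $(\mu,\lambda)$ elitist black-box algorithm maintains a multiset $X$ of $\mu$ search points (initially sampled one by one, each from a distribution depending only on previous points and the ranking of their fitness values); in each generation it samples $\lambda$ offspring from a distribution depending only on $X$ and the ranking of the fitness values in $X$ (not the values), learns the ranking of the offspring's fitness values, and the new $X$ must consist of $\mu$ offspring of highest fitness among the $\lambda$ offspring (ties broken arbitrarily; the parents are discarded). Runtime: number of sampled search points until an optimum is sampled for the first time; number of generations counted analogously. Las Vegas complexity: min over algorithms of max over functions of expected runtime. *)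

From HB Require Import structures.
From mathcomp Require Import all_boot all_order all_algebra.
From mathcomp Require Import all_classical all_reals ereal sequences.
Set Implicit Arguments. Unset Strict Implicit. Unset Printing Implicit Defensive.
Import Order.TTheory GRing.Theory Num.Theory.
Local Open Scope ring_scope.

Definition bitv (n : nat) := {ffun 'I_n -> bool}.
Definition pt0 (n : nat) : bitv n := [ffun => false].

Definition OM (n : nat) (z : bitv n) (x : bitv n) : nat :=
  (n - \sum_(i < n) (x i (+) z i))%N.

Definition is_opt (n : nat) (f : bitv n -> nat) (x : bitv n) : bool :=
  [forall y, (f y <= f x)%N].

Definition rankT (n k : nat) (f : bitv n -> nat) (X : k.-tuple (bitv n))
  : 'I_k -> 'I_k -> bool := fun i j => (f (tnth X i) <= f (tnth X j))%N.

(* ranking information of a sequence of points (indices outside the sequence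
   give no information) *)
Definition rankS (n : nat) (f : bitv n -> nat) (s : seq (bitv n))
  : nat -> nat -> bool :=
  fun i j => [&& (i < size s)%N, (j < size s)%N &
                 (f (nth (pt0 n) s i) <= f (nth (pt0 n) s j))%N].

(* A (mu,lam) elitist (comma) black-box algorithm.
   - ea_init s r : distribution of the next initial bitv, given the previous
     initial points s and their ranking r;
   - ea_gen X r : joint distribution of the lam offspring, given the current
     population X and its ranking r;
   - ea_sel X rX Y rY : which offspring form the next population (the tie
     breaking rule, which must select mu offspring of highest fitness). *)
Record EBBA (R : realType) (n mu lam : nat) := MkEBBA {
  ea_init : seq (bitv n) -> (nat -> nat -> bool) -> {ffun bitv n -> R};
  ea_gen : mu.-tuple (bitv n) -> ('I_mu -> 'I_mu -> bool) ->
           {ffun lam.-tuple (bitv n) -> R};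
  ea_sel : mu.-tuple (bitv n) -> ('I_mu -> 'I_mu -> bool) ->
           lam.-tuple (bitv n) -> ('I_lam -> 'I_lam -> bool) -> 'I_mu -> 'I_lam
}.

Definition is_dist (R : realType) (T : finType) (d : {ffun T -> R}) : Prop :=
  (forall x, 0 <= d x) /\ \sum_(x : T) d x = 1.

Definition valid (R : realType) (n mu lam : nat) (A : EBBA R n mu lam) : Prop :=
  [/\ (forall s r, is_dist (ea_init A s r)),
      (forall X r, is_dist (ea_gen A X r)) &
      (forall (f : bitv n -> nat) X Y,
         let s := ea_sel A X (rankT f X) Y (rankT f Y) in
         injective s /\
         forall i j, j \notin codom s -> (f (tnth Y j) <= f (tnth Y (s i)))%N)].

Section Semantics.
Variables (R : realType) (n mu lam : nat) (A : EBBA R n mu lam)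
          (f : bitv n -> nat).

Definition no_opt (s : seq (bitv n)) : bool := all (fun x => ~~ is_opt f x) s.

Definition init_prob (X : mu.-tuple (bitv n)) : R :=
  \prod_(k < mu) ea_init A (take k X) (rankS f (take k X)) (tnth X k).

Definition next_pop (X : mu.-tuple (bitv n)) (Y : lam.-tuple (bitv n))
  : mu.-tuple (bitv n) :=
  [tuple tnth Y (ea_sel A X (rankT f X) Y (rankT f Y) i) | i < mu].

(* surv t X = P(population after t generations is X and no optimum has been
   sampled so far) *)
Fixpoint surv (t : nat) : {ffun mu.-tuple (bitv n) -> R} :=
  match t with
  | 0 => [ffun X => init_prob X * (no_opt X)%:R]
  | t'.+1 => [ffun X' => \sum_(X : mu.-tuple (bitv n)) surv t' X *
        \sum_(Y : lam.-tuple (bitv n)) ea_gen A X (rankT f X) Y *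
             (no_opt Y)%:R * (X' == next_pop X Y)%:R]
  end.

(* P(number of generations until the optimum is first sampled > t);
   generations are counted after the initialization *)
Definition gens_gt (t : nat) : R := \sum_(X : mu.-tuple (bitv n)) surv t X.

(* P(number of sampled search points until the optimum is first sampled > m) *)
Definition evals_gt (m : nat) : R :=
  if (m < mu)%N then
    \sum_(X : mu.-tuple (bitv n)) init_prob X * (no_opt (take m X))%:R
  else
    let t := ((m - mu) %/ lam)%N in
    let j := ((m - mu) %% lam)%N in
    \sum_(X : mu.-tuple (bitv n)) surv t X *
       \sum_(Y : lam.-tuple (bitv n)) ea_gen A X (rankT f X) Y *
             (no_opt (take j Y))%:R.

(* expected runtime E[T] = sum_{m >= 0} P(T > m) *)
Definition exp_evals : \bar R := (\sum_(0 <= m <oo) (evals_gt m)%:E)%E.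

End Semantics.

Definition ceil_div (a b : nat) : nat := (a %/ b + (a %% b != 0))%N.

From HB Require Import structures.
From mathcomp Require Import all_boot all_order all_algebra.
From mathcomp Require Import all_classical all_reals ereal sequences.
From mathcomp Require Import zify.
Set Implicit Arguments. Unset Strict Implicit. Unset Printing Implicit Defensive.
Import Order.TTheory GRing.Theory Num.Theory.

(** The algorithms are deterministic and read the hidden string z from left to
right, k bits per generation, keeping a single 1 bit (the marker) just after
the part already known: the parent at stage p is z on positions < p, a 1 at p
and 0 after, and p can be decoded from it as the position of its last 1 bit.
The offspring copy the first p bits, try every k-bit pattern on [p, p + k) and
move the marker to p + k, so 2^k <= lambda of them cover all patterns and one
of them is the next stage. Every offspring agrees with that one wherever the
latter differs from z, hence is at least as far from z and strictly farther
unless it is the same point: selecting a fittest offspring always advances to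
the next stage. In generation ceil(n/k) the next stage is z itself. For
lambda = 2 and k = 1 this takes n generations of two evaluations each, plus
the initial point. *)

Local Open Scope ring_scope.

Lemma sum_indicator_mul (R : pzSemiRingType) (T : finType) (a : T) (F : T -> R) :
  \sum_x (x == a)%:R * F x = F a.
Proof.
by rewrite (bigD1 a) //= eqxx mul1r big1 ?addr0 // => x /negbTE ->; rewrite mul0r.
Qed.

Lemma tuple1_tnth0 (T : Type) (X : 1.-tuple T) : X = [tuple tnth X ord0].
Proof. by apply: eq_from_tnth => i; rewrite ord1. Qed.

Lemma tuple1_eq (T : eqType) (a b : T) : ([tuple a] == [tuple b]) = (a == b).
Proof. by rewrite -val_eqE /= eqseq_cons andbT. Qed.

Definition point_mass (R : realType) (T : finType) (a : T) : {ffun T -> R} :=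
  [ffun y => (y == a)%:R].

Lemma point_mass_dist (R : realType) (T : finType) (a : T) :
  is_dist (point_mass R a).
Proof.
split=> [x|]; first by rewrite ffunE ler0n.
under eq_bigr do rewrite ffunE -[_%:R]mulr1.
exact: sum_indicator_mul.
Qed.

Lemma nneseries_unit_le (R : realType) (u : nat -> R) (N : nat) :
  (forall m, 0 <= u m <= 1) -> (forall m, (N <= m)%N -> u m = 0) ->
  (\sum_(0 <= m <oo) (u m)%:E <= N%:R%:E)%E.
Proof.
move=> u01 u_eq0.
rewrite (nneseries_split 0 N); last by move=> m _; rewrite lee_fin; case/andP: (u01 m).
rewrite add0n eseries0 ?adde0; last by move=> m /u_eq0 ->.
rewrite sumEFin lee_fin.
apply: (@le_trans _ _ (\sum_(0 <= m < N) (1 : R))).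
  by apply: ler_sum => m _; case/andP: (u01 m).
by rewrite sumr_const_nat subn0.
Qed.

Section DeterministicCommaEA.
Variables (R : realType) (n l : nat) (x0 : bitv n)
          (G : bitv n -> l.+1.-tuple (bitv n)).

Definition best_offspring (X : 1.-tuple (bitv n)) (rX : 'I_1 -> 'I_1 -> bool)
  (Y : l.+1.-tuple (bitv n)) (rY : 'I_l.+1 -> 'I_l.+1 -> bool) (i : 'I_1)
  : 'I_l.+1 := odflt ord0 [pick j | [forall k, rY k j]].

Definition det_ea : EBBA R n 1 l.+1 :=
  MkEBBA (fun _ _ => point_mass R x0) (fun X _ => point_mass R (G (tnth X ord0)))
         best_offspring.

Lemma best_offspring_max (f : bitv n -> nat) X Y k i :
  (f (tnth Y k) <= f (tnth Y (best_offspring X (rankT f X) Y (rankT f Y) i)))%N.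
Proof.
rewrite /best_offspring; case: pickP => [j /forallP max_j | no_max] /=.
  exact: max_j.
have [j _ max_j] := @arg_maxnP _ ord0 xpredT (fun j => f (tnth Y j)) isT.
by have := no_max j; rewrite (introT forallP) // => k'; exact: max_j.
Qed.

Lemma det_ea_valid : valid det_ea.
Proof.
split=> [s r|X r|f X Y]; try exact: point_mass_dist.
split=> [i j _|i j _]; [by rewrite !ord1 | exact: best_offspring_max].
Qed.

Variable f : bitv n -> nat.

Fixpoint traj (t : nat) : bitv n :=
  if t is t'.+1 then tnth (next_pop det_ea f [tuple traj t'] (G (traj t'))) ord0
  else x0.

Fixpoint unsolved (t : nat) : bool :=
  if t is t'.+1 then unsolved t' && no_opt f (G (traj t'))
  else no_opt f [:: x0].

Lemma init_prob_det X : init_prob det_ea f X = (X == [tuple x0])%:R.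
Proof. by rewrite /init_prob big_ord1 /= ffunE {2}(tuple1_tnth0 X) tuple1_eq. Qed.

Lemma surv_det t X : surv det_ea f t X = (X == [tuple traj t])%:R * (unsolved t)%:R.
Proof.
elim: t X => [|t IH] X.
  rewrite /= ffunE init_prob_det (tuple1_tnth0 X) tuple1_eq.
  by case: eqP => [->|]; rewrite ?mul0r.
rewrite /= ffunE; under eq_bigr do rewrite IH -mulrA.
rewrite sum_indicator_mul; under eq_bigr do rewrite /= ffunE -!mulrA.
rewrite sum_indicator_mul [next_pop _ _ _ _]tuple1_tnth0 /=.
by case: (unsolved t); case: (no_opt _ _); rewrite ?mul0r ?mulr0 ?mul1r ?mulr1.
Qed.

Lemma gens_gt_det t : gens_gt det_ea f t = (unsolved t)%:R.
Proof. by rewrite /gens_gt; under eq_bigr do rewrite surv_det; rewrite sum_indicator_mul. Qed.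

Lemma evals_gt_det m : evals_gt det_ea f m =
  ((m == 0)%N || unsolved ((m - 1) %/ l.+1) &&
     no_opt f (take ((m - 1) %% l.+1) (G (traj ((m - 1) %/ l.+1)))))%:R.
Proof.
rewrite /evals_gt; case: ifPn => [m_lt1 | m_ge1].
  have -> : m = 0%N by case: m m_lt1.
  rewrite -[RHS](sum_indicator_mul [tuple x0] (fun=> 1)).
  by apply: eq_bigr => X _; rewrite init_prob_det take0.
have -> : (m == 0)%N = false by case: m m_ge1.
under eq_bigr do rewrite surv_det -mulrA.
rewrite sum_indicator_mul; under eq_bigr do rewrite /= ffunE.
rewrite sum_indicator_mul.
by case: (unsolved _); case: (no_opt _ _); rewrite ?mul0r ?mulr0 ?mul1r.
Qed.

End DeterministicCommaEA.

Local Close Scope ring_scope.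

Section OneMax.
Variable n : nat.

Lemma is_opt_OM (z : bitv n) : is_opt (OM z) z.
Proof.
apply/forallP => y; rewrite /OM [X in _ <= _ - X]big1 ?subn0 ?leq_subr //.
by move=> i _; rewrite addbb.
Qed.

Lemma eq_of_OM_le_agree (z y w : bitv n) :
  (forall j, y j != z j -> w j = y j) -> OM z y <= OM z w -> w = y.
Proof.
move=> agree le_yw.
have dist_split : \sum_(j < n) (w j (+) z j) =
    \sum_(j < n) (y j (+) z j) + \sum_(j < n) (w j (+) y j).
  rewrite -big_split; apply: eq_bigr => j _ /=.
  by move: (agree j); case: (w j); case: (y j); case: (z j) => //= /(_ isT).
have dist_le_n : \sum_(j < n) (w j (+) z j) <= n.
  apply: (@leq_trans (\sum_(j < n) 1)); first by apply: leq_sum => j _; exact: leq_b1.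
  by rewrite sum_nat_const card_ord muln1.
have /eqP : \sum_(j < n) (w j (+) y j) = 0.
  by move: le_yw dist_le_n; rewrite /OM dist_split; lia.
rewrite sum_nat_eq0 => /forallP wy_eq; apply/ffunP => j.
by move: (wy_eq j); case: (w j); case: (y j).
Qed.

End OneMax.

Definition bit_at (m : nat) (x : {ffun 'I_m -> bool}) (i : nat) : bool :=
  if insub i is Some o then x o else false.

Lemma bit_at_ord (m : nat) (x : {ffun 'I_m -> bool}) (i : 'I_m) : bit_at x i = x i.
Proof. by rewrite /bit_at valK. Qed.

Section ScanEncoding.
Variables n k : nat.

(** Indices past [2 ^ k] give the all-zero pattern. *)
Definition pattern (c : nat) : {ffun 'I_k -> bool} :=
  nth [ffun => false] (enum {ffun 'I_k -> bool}) c.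

Definition marker_pos (x : bitv n) : nat := \max_(j < n | x j) j.

Definition scan_offspring (x : bitv n) (c : nat) : bitv n :=
  [ffun j : 'I_n => if j < marker_pos x then x j
     else if j < marker_pos x + k then bit_at (pattern c) (j - marker_pos x)
     else j == marker_pos x + k :> nat].

Definition scan_children (l : nat) (x : bitv n) : l.+1.-tuple (bitv n) :=
  [tuple scan_offspring x c | c < l.+1].

Definition scan_start : bitv n := [ffun j : 'I_n => j == 0 :> nat].

Definition scan_state (z : bitv n) (p : nat) : bitv n :=
  [ffun j : 'I_n => if j < p then z j else j == p :> nat].

Lemma scan_state0 z : scan_state z 0 = scan_start.
Proof. by apply/ffunP => j; rewrite !ffunE. Qed.

Lemma scan_state_ge z p : n <= p -> scan_state z p = z.
Proof. by move=> le_np; apply/ffunP => j; rewrite ffunE (leq_trans (ltn_ord j)). Qed.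

Lemma marker_pos_state z p : p < n -> marker_pos (scan_state z p) = p.
Proof.
move=> lt_pn; apply/eqP; rewrite eqn_leq; apply/andP; split.
  apply/bigmax_leqP => j; rewrite ffunE; case: ifP => [/ltnW //|_ /eqP -> //].
by apply: (@leq_bigmax_cond _ _ _ (Ordinal lt_pn)); rewrite ffunE /= ltnn eqxx.
Qed.

Lemma scan_offspring_tail z p c (j : 'I_n) : p < n -> p + k <= j ->
  scan_offspring (scan_state z p) c j = (j == p + k :> nat).
Proof.
move=> lt_pn le_j; rewrite ffunE marker_pos_state //.
by rewrite ltnNge (leq_trans (leq_addr k p) le_j) ltnNge le_j.
Qed.

Lemma scan_offspring_next z p : p < n ->
  exists2 c, c < 2 ^ k & scan_offspring (scan_state z p) c = scan_state z (p + k).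
Proof.
move=> lt_pn; pose P : {ffun 'I_k -> bool} := [ffun o : 'I_k => bit_at z (p + o)].
exists (index P (enum {ffun 'I_k -> bool})).
  by rewrite -[2]card_bool -[k in _ ^ k]card_ord -card_ffun cardE index_mem mem_enum.
apply/ffunP => j; rewrite !ffunE marker_pos_state //.
case: ifPn => [lt_jp|ge_jp]; first by rewrite lt_jp ltn_addr.
case: ifP => // lt_jpk.
have lt_jp_k : j - p < k by lia.
by rewrite /pattern nth_index ?mem_enum // /bit_at insubT ffunE /= subnKC ?bit_at_ord //; lia.
Qed.

End ScanEncoding.

Section ScanEA.
Variables (R : realType) (n l k : nat) (z : bitv n).
Hypothesis enough_children : 2 ^ k <= l.+1.

Lemma scan_children_next p : p < n ->
  exists c : 'I_l.+1, tnth (scan_children k l (scan_state z p)) c = scan_state z (p + k).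
Proof.
move=> lt_pn; have [c lt_c next_c] := scan_offspring_next k z lt_pn.
by exists (Ordinal (leq_trans lt_c enough_children)); rewrite tnth_mktuple.
Qed.

Lemma traj_scan t : t * k < n ->
  traj R (scan_start n) (scan_children k l) (OM z) t = scan_state z (t * k).
Proof.
elim: t => [|t IH] lt_tk; first by rewrite /= scan_state0.
have lt_tk' : t * k < n by move: lt_tk; rewrite mulSn; lia.
rewrite /= IH // /next_pop tnth_mktuple mulSnr.
have [c next_c] := scan_children_next lt_tk'.
apply: (eq_of_OM_le_agree (z := z)); last by rewrite -next_c; exact: best_offspring_max.
move=> j; rewrite ffunE; case: ifP => [_|ge_j _]; first by rewrite eqxx.
by rewrite tnth_mktuple scan_offspring_tail // leqNgt ge_j.
Qed.

Lemma unsolved_scan t : n <= t * k ->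
  unsolved R (scan_start n) (scan_children k l) (OM z) t = false.
Proof.
elim: t => [|t IH] le_n_tk.
  by rewrite /= -(scan_state0 z) scan_state_ge ?is_opt_OM.
case: (ltnP (t * k) n) => [lt_tk|/IH /= -> //].
apply/negbTE/nandP; right; rewrite traj_scan //; apply/allPn.
have [c next_c] := scan_children_next lt_tk.
exists (tnth (scan_children k l (scan_state z (t * k))) c); first exact: mem_tnth.
by rewrite next_c scan_state_ge ?is_opt_OM // -mulSnr.
Qed.

End ScanEA.

Lemma leq_ceil_div_mul a b : 0 < b -> a <= ceil_div a b * b.
Proof.
move=> b_gt0; rewrite /ceil_div {1}(divn_eq a b) mulnDl.
by have := ltn_pmod a b_gt0; case: eqP => [->|_] /=; lia.
Qed.

Local Open Scope ring_scope.

Theorem theorem7 :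
  (forall (R : realType) (n : nat),
     exists A : EBBA R n 1 2, valid A /\
       forall z : bitv n,
         (exp_evals A (OM z) <= ((2 * n + 1)%N%:R)%:E)%E /\
         gens_gt A (OM z) n.+1 = 0)
  /\
  (forall (R : realType) (n lam : nat), (2 <= lam)%N ->
     exists A : EBBA R n 1 lam, valid A /\
       forall z : bitv n,
         gens_gt A (OM z) (ceil_div n (trunc_log 2 lam)) = 0).
Proof.
split=> [R n | R n lam].
  exists (det_ea R (scan_start n) (scan_children 1 1)); split=> [|z].
    exact: det_ea_valid.
  have solved t : (n <= t)%N ->
      unsolved R (scan_start n) (scan_children 1 1) (OM z) t = false.
    by move=> le_nt; apply: unsolved_scan; rewrite ?muln1.
  split; last by rewrite gens_gt_det solved.
  apply: nneseries_unit_le => m; rewrite evals_gt_det.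
    by case: (_ || _); rewrite ?lexx ?ler01.
  move=> le_m; rewrite solved ?orbF; last lia.
  by case: m le_m => [|m]; rewrite ?addn1.
case: lam => [|[|l]] // _.
exists (det_ea R (scan_start n) (scan_children (trunc_log 2 l.+2) l.+1)).
split=> [|z]; first exact: det_ea_valid.
rewrite gens_gt_det unsolved_scan ?trunc_logP //.
by apply: leq_ceil_div_mul; rewrite trunc_log_gt0.
Qed.
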